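(* Let $X,Y$ be Banach lattices and $S\colon X\to Y$ bounded and convex. Then $S$ is Lipschitz on bounded subsets: for every $r>0$ there exists $L>0$ with $\|Sx-Sy\|\le L\|x-y\|$ for all $x,y\in X$ with $\|x\|\le r$, $\|y\|\le r$.
   Context: An operator $S\colon X\to Y$ is convex if $S(\lambda x+(1-\lambda)y)\le\lambda Sx+(1-\lambda)Sy$ for all $x,y\in X$, $\lambda\in[0,1]$, and bounded if $\sup_{\|x\|\le r}\|Sx\|<\infty$ for every $r>0$. *)

From HB Require Import structures.
From mathcomp Require Import all_boot all_order all_algebra.
From mathcomp Require Import all_classical all_reals all_analysis.
Set Implicit Arguments. Unset Strict Implicit. Unset Printing Implicit Defensive.
Import Order.TTheory GRing.Theory Num.Theory.
Import numFieldNormedType.Exports.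
Local Open Scope ring_scope.

Section BL.
Variables (R : realType) (V : completeNormedModType R) (le : V -> V -> Prop).

Definition is_sup (x y z : V) : Prop :=
  [/\ le x z, le y z & forall w, le x w -> le y w -> le z w].

Definition is_modulus (x a : V) : Prop := is_sup x (- x) a.

(** [le] makes the Banach space [V] a (real) Banach lattice:
    an ordered vector space (partial order compatible with addition and
    nonnegative scaling) that is a lattice (any two elements have a supremum;
    infima then exist as x /\ y = -((-x) \/ (-y))), with a lattice norm
    (|x| <= |y| implies ||x|| <= ||y||). Completeness comes from
    [completeNormedModType]. *)
Record banach_lattice : Prop := BanachLattice {
  bl_refl : forall x, le x x;
  bl_antisym : forall x y, le x y -> le y x -> x = y;
  bl_trans : forall x y z, le x y -> le y z -> le x z;
  bl_add : forall x y z, le x y -> le (x + z) (y + z);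
  bl_scale : forall (a : R) x y, 0 <= a -> le x y -> le (a *: x) (a *: y);
  bl_sup : forall x y, exists z, is_sup x y z;
  bl_norm : forall x y ax ay, is_modulus x ax -> is_modulus y ay ->
      le ax ay -> `|x| <= `|y|
}.
End BL.

Definition convex_op (R : realType) (X Y : normedModType R)
  (leY : Y -> Y -> Prop) (S : X -> Y) : Prop :=
  forall (x y : X) (l : R), 0 <= l <= 1 ->
    leY (S (l *: x + (1 - l) *: y)) (l *: S x + (1 - l) *: S y).

Definition bounded_op (R : realType) (X Y : normedModType R) (S : X -> Y) : Prop :=
  forall r : R, 0 < r -> exists M : R, forall x : X, `|x| <= r -> `|S x| <= M.

(* For x != y in the ball of radius r, extend the segment from x through y by
   r beyond y, to a point z of the ball of radius 2r.  Since y is the convex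
   combination (d z + r x) / (d + r) with d = ||y - x||, convexity gives
   S y - S x <= d / (d + r) (S z - S x), and symmetrically for S x - S y.  In a
   Banach lattice, two-sided order bounds u <= b and -u <= b' control the norm:
   ||u|| <= ||b|| + ||b'||.  With ||S|| <= M on the 2r-ball this yields the
   Lipschitz constant 4 M / r. *)
From mathcomp Require Import all_boot all_order all_algebra.
From mathcomp Require Import all_classical all_reals all_analysis.
From mathcomp Require Import ring lra.
Import Order.TTheory GRing.Theory Num.Theory.
Import numFieldNormedType.Exports.
Local Open Scope ring_scope.

Section BanachLatticeTheory.
Context {R : realType} {V : completeNormedModType R} {le : V -> V -> Prop}.
Hypothesis hV : banach_lattice le.

Lemma bl_subr_ge0 {a b : V} : le a b -> le 0 (b - a).
Proof. by move=> /(bl_add hV (- a)); rewrite subrr. Qed.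

Lemma bl_ler_addr {a b : V} : le 0 b -> le a (a + b).
Proof. by move=> /(bl_add hV a); rewrite add0r addrC. Qed.

Lemma modulus_ge0 {a m : V} : is_modulus le a m -> le 0 m.
Proof.
case=> le_am le_Nam _.
have le_m2m : le (m - a) (m + m) by have := bl_add hV m le_Nam; rewrite addrC.
have m2_ge0 : le 0 (m + m) := bl_trans hV (bl_subr_ge0 le_am) le_m2m.
have half_ge0 : 0 <= 2^-1 :> R by rewrite invr_ge0.
have := bl_scale hV half_ge0 m2_ge0.
by rewrite scaler0 -[m + m]mulr2n -[m *+ 2]scaler_nat scalerA mulVf ?pnatr_eq0 // scale1r.
Qed.

Lemma modulus_of_ge0 {w : V} : le 0 w -> is_modulus le w w.
Proof.
move=> w_ge0; split; [exact: bl_refl | | by []].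
have := bl_add hV (- w) w_ge0; rewrite add0r subrr => le_Nw0.
exact: (bl_trans hV le_Nw0 w_ge0).
Qed.

Lemma norm_modulus {a m : V} : is_modulus le a m -> `|m| = `|a|.
Proof.
move=> ma; have mm := modulus_of_ge0 (modulus_ge0 ma).
by apply/eqP; rewrite eq_le !(bl_norm hV _ _ (bl_refl hV m)).
Qed.

Lemma bl_norm_le_bounds {u b b' : V} :
  le u b -> le (- u) b' -> `|u| <= `|b| + `|b'|.
Proof.
move=> le_ub le_Nub'.
have [m mb] := bl_sup hV b (- b); have [m' mb'] := bl_sup hV b' (- b').
have [mu mu_def] := bl_sup hV u (- u); have [_ _ mu_least] := mu_def.
have [[le_bm _ _] [le_b'm' _ _]] := (mb, mb').
have le_mmm' : le m (m + m') := bl_ler_addr (modulus_ge0 mb').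
have le_m'mm' : le m' (m + m') by rewrite addrC; apply: bl_ler_addr (modulus_ge0 mb).
have le_umm' : le u (m + m') := bl_trans hV le_ub (bl_trans hV le_bm le_mmm').
have le_Numm' : le (- u) (m + m') := bl_trans hV le_Nub' (bl_trans hV le_b'm' le_m'mm').
have mm'_ge0 : le 0 (m + m') := bl_trans hV (modulus_ge0 mb) le_mmm'.
have := bl_norm hV mu_def (modulus_of_ge0 mm'_ge0) (mu_least _ le_umm' le_Numm').
move/le_trans; apply.
by rewrite -(norm_modulus mb) -(norm_modulus mb') ler_normD.
Qed.

End BanachLatticeTheory.

Section ConvexOperatorLipschitz.
Context {R : realType} {X : normedModType R} {Y : completeNormedModType R}.
Context {leY : Y -> Y -> Prop} {S : X -> Y}.
Hypotheses (hY : banach_lattice leY) (convS : convex_op leY S).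

Lemma convex_op_extrapolate (p q : X) (s : R) : 0 <= s ->
  leY (S q - S p) ((1 + s)^-1 *: (S (q + s *: (q - p)) - S p)).
Proof.
move=> s_ge0; set l := (1 + s)^-1.
have l01 : 0 <= l <= 1.
  by rewrite invr_ge0 invr_le1 ?unitf_gt0 ?lerDl; lra.
have l1s : l * (1 + s) = 1 by rewrite mulVf // gt_eqF //; lra.
have q_comb : l *: (q + s *: (q - p)) + (1 - l) *: p = q.
  have -> : 1 - l = l * s by rewrite -[in LHS]l1s; ring.
  have -> : q + s *: (q - p) = (1 + s) *: q - s *: p.
    by rewrite scalerBr scalerDl scale1r addrA.
  by rewrite scalerBr !scalerA l1s scale1r subrK.
have := bl_add hY (- S p) (convS (q + s *: (q - p)) p l l01).
by rewrite q_comb scalerBl scale1r addrA addrAC addrK -scalerBr.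
Qed.

Context {r M : R}.

Lemma convex_op_sub_le_ball (x y : X) : 0 < r ->
    (forall z, `|z| <= 2 * r -> `|S z| <= M) ->
    `|x| <= r -> `|y| <= r -> x != y ->
  exists2 b : Y, leY (S y - S x) ((`|y - x| / (`|y - x| + r)) *: b)
               & `|b| <= M + M.
Proof.
move=> r_gt0 S_bounded xr yr xy; set d := `|y - x|.
have d_gt0 : 0 < d by rewrite normr_gt0 subr_eq0 eq_sym.
have rd_ge0 : 0 <= r / d by rewrite divr_ge0 // ltW.
set z := y + (r / d) *: (y - x).
have zr : `|z| <= 2 * r.
  apply: le_trans (ler_normD _ _) _.
  by rewrite normrZ ger0_norm // -/d divfK ?gt_eqF //; lra.
exists (S z - S x).
  have -> : d / (d + r) = (1 + r / d)^-1.
    by field; rewrite !gt_eqF // ltr_wpDr // ltW.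
  exact: convex_op_extrapolate.
apply: le_trans (ler_normB _ _) _; apply: lerD; apply: S_bounded => //.
by apply: le_trans xr _; lra.
Qed.

Lemma convex_op_lipschitz_ball (x y : X) : 0 < r ->
    (forall z, `|z| <= 2 * r -> `|S z| <= M) ->
    `|x| <= r -> `|y| <= r -> `|S x - S y| <= 4 * M / r * `|x - y|.
Proof.
move=> r_gt0 S_bounded xr yr.
have [->|xy] := eqVneq x y; first by rewrite !subrr !normr0 mulr0.
have yx : y != x by rewrite eq_sym.
have [b le_ub bM] := convex_op_sub_le_ball y x r_gt0 S_bounded yr xr yx.
have [b' le_Nub' b'M] := convex_op_sub_le_ball x y r_gt0 S_bounded xr yr xy.
rewrite -opprB distrC in le_Nub'.
have := bl_norm_le_bounds hY le_ub le_Nub'.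
set d := `|x - y|; set l := d / (d + r).
have d_ge0 : 0 <= d := normr_ge0 _.
have l_ge0 : 0 <= l by rewrite divr_ge0 // addr_ge0 // ltW.
have l_le : l <= d / r.
  by rewrite ler_wpM2l // lef_pV2 ?posrE ?lerDr // ltr_wpDl.
have M_ge0 : 0 <= M by have := normr_ge0 b; lra.
rewrite !(normrZ l) (ger0_norm l_ge0) -mulrDr => /le_trans; apply.
have bb'M : `|b| + `|b'| <= 4 * M by lra.
apply: le_trans (ler_wpM2l l_ge0 bb'M) _.
have -> : 4 * M / r * d = d / r * (4 * M) by ring.
by apply: ler_wpM2r => //; lra.
Qed.

End ConvexOperatorLipschitz.

Theorem corollaryA4 (R : realType) (X Y : completeNormedModType R)
  (leX : X -> X -> Prop) (leY : Y -> Y -> Prop)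
  (hX : banach_lattice leX) (hY : banach_lattice leY) (S : X -> Y) :
  convex_op leY S -> bounded_op S ->
  forall r : R, 0 < r -> exists L : R, 0 < L /\
    forall x y : X, `|x| <= r -> `|y| <= r -> `|S x - S y| <= L * `|x - y|.
Proof.
move=> convS boundedS r r_gt0.
have [M S_bounded] : exists M, forall z, `|z| <= 2 * r -> `|S z| <= M.
  by apply: boundedS; lra.
have S0_le : `|S 0| <= M by apply: S_bounded; rewrite normr0; lra.
have M_ge0 : 0 <= M := le_trans (normr_ge0 _) S0_le.
have K_ge0 : 0 <= 4 * M / r by rewrite divr_ge0 //; lra.
exists (4 * M / r + 1); split=> [|x y xr yr]; first by lra.
apply: le_trans (convex_op_lipschitz_ball hY convS x y r_gt0 S_bounded xr yr) _.
by apply: ler_wpM2r => //; lra.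
Qed.
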